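(* Let $q\ge1$ be an integer. Let $T_{q+2}'=\sum_{i,j,k\in\{0,\dots,q+1\},\ i+j+k\equiv q+1 \pmod{q+2}} x_iy_jz_k$ (the structural tensor of $\mathbb Z_{q+2}$ after renaming each $z_k$ as $z_{(k-1)\bmod (q+2)}$), and let $$CW_q=x_0y_0z_{q+1}+x_0y_{q+1}z_0+x_{q+1}y_0z_0+\sum_{k=1}^q\left(x_0y_kz_{q+1-k}+x_ky_0z_{q+1-k}+x_ky_{q+1-k}z_0\right).$$ Then $CW_q$ is a monomial degeneration of $T'_{q+2}$.
   Context: Tensors are trilinear forms in variables $x_0,\dots,x_{q+1}$, $y_0,\dots,y_{q+1}$, $z_0,\dots,z_{q+1}$ with field coefficients; both tensors above have all listed coefficients equal to $1$. For tensors $A,B$ over the same variable sets, $A$ is a monomial degeneration of $B$ if every coefficient of $A$ is either the corresponding coefficient of $B$ or $0$, and there are functions $a,b,c$ from the $x$-, $y$-, $z$-variables respectively to $\mathbb Z$ such that for every term $x_iy_jz_k$ with nonzero coefficient in $B$ we have $a(x_i)+b(y_j)+c(z_k)\ge0$, with equality if and only if the coefficient of $x_iy_jz_k$ in $A$ is nonzero. *)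

From mathcomp Require Import all_boot all_order all_algebra.
Set Implicit Arguments. Unset Strict Implicit. Unset Printing Implicit Defensive.
Import Order.TTheory GRing.Theory Num.Theory.
Local Open Scope ring_scope.

(* A tensor over variables x_0..x_{n-1}, y_0..y_{n-1}, z_0..z_{n-1}:
   T i j k is the coefficient of x_i y_j z_k. *)
Definition tensor (F : fieldType) (n : nat) := 'I_n -> 'I_n -> 'I_n -> F.

Definition monomial_degeneration (F : fieldType) (n : nat) (A B : tensor F n) : Prop :=
  (forall i j k, A i j k = B i j k \/ A i j k = 0) /\
  exists (a b c : 'I_n -> int),
    forall i j k, B i j k != 0 ->
      (0 <= a i + b j + c k) /\ ((a i + b j + c k == 0) = (A i j k != 0)).

Definition Tprime (F : fieldType) (q : nat) : tensor F q.+2 :=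
  fun i j k => if ((i + j + k) %% q.+2 == q.+1 %% q.+2)%N then 1 else 0.

Definition cw_supp (q i j k : nat) : bool :=
  [|| [&& i == 0, j == 0 & k == q.+1],
      [&& i == 0, j == q.+1 & k == 0],
      [&& i == q.+1, j == 0 & k == 0] |
      has (fun t => [|| [&& i == 0, j == t & k == q.+1 - t],
                        [&& i == t, j == 0 & k == q.+1 - t] |
                        [&& i == t, j == q.+1 - t & k == 0]]) (iota 1 q)]%N.

Definition CW (F : fieldType) (q : nat) : tensor F q.+2 :=
  fun i j k => if cw_supp q i j k then 1 else 0.

From mathcomp Require Import all_boot all_order all_algebra zify.
Import GRing.Theory Num.Theory.

Set Implicit Arguments.
Unset Strict Implicit.
Unset Printing Implicit Defensive.

(* Give x_i and y_i the weight w(i) = i + [i != 0] + [i == q+1] and z_k the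
   weight w(k) - (q+3).  On the support of T', i+j+k = q+1 (mod q+2) forces
   i+j+k >= q+1, and for such triples w(i)+w(j)+w(k) >= q+3, with equality
   exactly when i+j+k = q+1 and one index vanishes: the support of CW_q. *)

Lemma cw_suppE q i j k :
  cw_supp q i j k = (i + j + k == q.+1) && [|| i == 0, j == 0 | k == 0].
Proof.
rewrite /cw_supp; apply/idP/idP.
- by case/or4P=> [||| /hasP[t]]; rewrite ?mem_iota /=; lia.
- case/andP=> /eqP sum_ijk zero_ijk.
  have [/or3P[]->|not_corner] := boolP [|| [&& i == 0, j == 0 & k == q.+1],
      [&& i == 0, j == q.+1 & k == 0] | [&& i == q.+1, j == 0 & k == 0]];
    rewrite ?orbT //.
  apply/or4P/Or44/hasP; exists (if i == 0 then j else i); rewrite ?mem_iota;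
    case: eqP => /=; lia.
Qed.

Lemma leq_of_eqn_mod d r s : r < d -> s = r %[mod d] -> r <= s.
Proof. by move=> lt_rd; rewrite (modn_small lt_rd) => <-; apply: leq_mod. Qed.

Definition cw_weight q (i : nat) : nat := i + (i != 0) + (i == q.+1).

Lemma cw_weight_sum_geif q i j k :
  i <= q.+1 -> j <= q.+1 -> k <= q.+1 -> q.+1 <= i + j + k ->
  q + 3 <= cw_weight q i + cw_weight q j + cw_weight q k
    ?= iff (i + j + k == q.+1) && [|| i == 0, j == 0 | k == 0].
Proof. by rewrite /cw_weight; split; lia. Qed.

Local Open Scope ring_scope.

Theorem mainTheorem5 (F : fieldType) (q : nat) (hq : (1 <= q)%N) :
  monomial_degeneration (@CW F q) (@Tprime F q).
Proof.
have le_ord (i : 'I_q.+2) : (i <= q.+1)%N by rewrite -ltnS.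
split=> [i j k|].
  rewrite /CW /Tprime cw_suppE.
  by case: ifP => [/andP[/eqP-> _]|_]; [left; rewrite eqxx | right].
exists (fun i => (cw_weight q i)%:Z), (fun j => (cw_weight q j)%:Z),
  (fun k => (cw_weight q k)%:Z - (q + 3)%:Z).
move=> i j k; rewrite /Tprime /CW cw_suppE.
case: ifP => [/eqP/(leq_of_eqn_mod (ltnSn _)) sum_ge _|_]; last by rewrite eqxx.
have [W_ge W_eq] := cw_weight_sum_geif (le_ord i) (le_ord j) (le_ord k) sum_ge.
rewrite addrA -!PoszD subr_ge0 lez_nat subr_eq0 eqz_nat W_ge eq_sym W_eq.
by split=> //; case: ifP; rewrite ?oner_neq0 ?eqxx.
Qed.
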